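(* $\mathcal{TC}(\mathrm{RL}_1^P)\subsetneq\mathcal{TC}(\mathrm{RL}_2^P)$.
   Context: A right-linear grammar is $G=(N,T,P,S)$ with rules $A\to wB$ or $A\to w$ ($A,B\in N$, $w\in T^*$). For a regular language $L$, $\mathrm{Prod}_{RL}(L)$ is the minimum of $|P|$ over all right-linear grammars generating $L$, and $\mathrm{RL}_n^P=\{L\text{ regular}:\mathrm{Prod}_{RL}(L)\le n\}$. A tree-controlled grammar is a quintuple $G=(N,T,P,S,R)$ where $(N,T,P,S)$ is a context-free grammar whose rules are all non-erasing, except that $S\to\lambda$ is allowed if $S$ does not occur on the right-hand side of any rule, and $R\subseteq (N\cup T)^*$ is a regular control language. The word of level $j$ of a derivation tree is the word of all nodes of depth $j$ read left to right. $L(G)$ consists of all $z\in T^*$ having a derivation tree with yield $z$ such that the words of all levels except the last belong to $R$. For a family $\mathcal F$ of regular languages, $\mathcal{TC}(\mathcal F)$ is the family of languages generated by tree-controlled grammars with control language in $\mathcal F$. *)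

From mathcomp Require Import all_boot.
Set Implicit Arguments.
Unset Strict Implicit.
Unset Printing Implicit Defensive.

(* A right-linear grammar over terminal alphabet V : nonterminals M (finite),
   a finite list of rules (A, w, None) for A -> w and (A, w, Some B) for
   A -> w B, and an axiom S. *)
Section RightLinear.
Variables (M V : finType).

Inductive rl_gen (rules : seq (M * seq V * option M)) : M -> seq V -> Prop :=
| rl_term A w : (A, w, None) \in rules -> rl_gen rules A w
| rl_step A w B v : (A, w, Some B) \in rules -> rl_gen rules B v ->
    rl_gen rules A (w ++ v).
End RightLinear.

(* R belongs to RL_n^P : R is generated by some right-linear grammar with at
   most n productions, i.e. Prod_RL(R) <= n (|P| counts distinct rules). *)
Definition RLP (V : finType) (n : nat) (R : seq V -> Prop) : Prop :=
  exists (M : finType) (rules : seq (M * seq V * option M)) (S : M),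
    size (undup rules) <= n /\ forall w, R w <-> rl_gen rules S w.

(* TEps is the leaf labelled lambda (child of a node rewritten by A -> lambda). *)
Inductive tree (N T : Type) : Type :=
| TLeaf (a : T)
| TEps
| TNode (A : N) (ts : list (tree N T)).
Arguments TEps {N T}.

Section Trees.
Variables (N T : finType).

Definition label (t : tree N T) : option (N + T) :=
  match t with TLeaf a => Some (inr a) | TEps => None | TNode A _ => Some (inl A) end.

Definition node_word (t : tree N T) : seq (N + T) := pmap id [:: label t].

Fixpoint yield (t : tree N T) : seq T :=
  match t with
  | TLeaf a => [:: a]
  | TEps => [::]
  | TNode _ ts =>
      (fix yl (us : list (tree N T)) : seq T :=
         match us with [::] => [::] | u :: us' => yield u ++ yl us' end) ts
  end.

(* depth of the tree = index of its last level *)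
Fixpoint height (t : tree N T) : nat :=
  match t with
  | TNode _ ts =>
      (fix hs (us : list (tree N T)) : nat :=
         match us with [::] => 0 | u :: us' => maxn (height u).+1 (hs us') end) ts
  | _ => 0
  end.

Fixpoint level (j : nat) (t : tree N T) : seq (N + T) :=
  match j with
  | 0 => node_word t
  | j'.+1 => match t with
             | TNode _ ts => flatten (map (level j') ts)
             | _ => [::]
             end
  end.

Definition is_eps (t : tree N T) : bool := if t is TEps then true else false.

Definition rule_ok (P : seq (N * seq (N + T))) (A : N) (ts : seq (tree N T)) : Prop :=
  (A, pmap label ts) \in P /\
  (ts = [:: TEps] \/ (ts <> [::] /\ all (fun u => ~~ is_eps u) ts)).

Fixpoint valid (P : seq (N * seq (N + T))) (t : tree N T) : Prop :=
  match t with
  | TLeaf _ => True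
  | TEps => True
  | TNode A ts => rule_ok P A ts /\
      (fix vs (us : list (tree N T)) : Prop :=
         match us with [::] => True | u :: us' => valid P u /\ vs us' end) ts
  end.

Definition deriv_tree (P : seq (N * seq (N + T))) (S : N) (t : tree N T) : Prop :=
  label t = Some (inl S) /\ valid P t.

Definition tc_wf (P : seq (N * seq (N + T))) (S : N) : Prop :=
  forall A alpha, (A, alpha) \in P -> alpha = [::] ->
    A = S /\ forall B beta, (B, beta) \in P -> inl S \notin beta.

Definition tc_lang (P : seq (N * seq (N + T))) (S : N) (R : seq (N + T) -> Prop)
  (z : seq T) : Prop :=
  exists t, deriv_tree P S t /\ yield t = z /\
    forall j, j < height t -> R (level j t).
End Trees.

Definition TC_RLP (n : nat) (T : finType) (L : seq T -> Prop) : Prop :=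
  exists (N : finType) (P : seq (N * seq (N + T))) (S : N) (R : seq (N + T) -> Prop),
    tc_wf P S /\ RLP n R /\ forall z, L z <-> tc_lang P S R z.

From mathcomp Require Import all_boot.
Set Implicit Arguments.
Unset Strict Implicit.
Unset Printing Implicit Defensive.

(* Inclusion: RL_n^P grows with n, hence so does TC(RL_n^P).

   Strictness: a right-linear grammar with a single production generates at
   most one word.  In a tree-controlled grammar (N,T,P,S,R) with such an R,
   every non-final level of an accepted derivation tree must therefore equal
   the root level [S]; such a tree is a unary chain of S-nodes ending in one
   production, so its yield is no longer than the longest right-hand side of
   P.  Hence every language of TC(RL_1^P) is finite (length-bounded).  On the
   other hand the grammar S -> SS | a, controlled by the two-rule language S*,
   generates a^(2^k) for every k via the complete binary trees, so its
   language lies in TC(RL_2^P) but has unbounded word lengths. *)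

Lemma RLP_mono (V : finType) m n (R : seq V -> Prop) :
  m <= n -> RLP m R -> RLP n R.
Proof.
move=> le_mn [M [rules [S [size_rules genR]]]].
by exists M, rules, S; split=> //; apply: leq_trans le_mn.
Qed.

Lemma TC_RLP_mono m n (T : finType) (L : seq T -> Prop) :
  m <= n -> TC_RLP m L -> TC_RLP n L.
Proof.
move=> le_mn [N [P [S [R [wf [RLP_R genL]]]]]].
by exists N, P, S, R; split=> //; split=> //; apply: RLP_mono RLP_R.
Qed.

Section SingleRule.
Variables (M V : finType) (rules : seq (M * seq V * option M)).
Hypothesis one_rule : size (undup rules) <= 1.

Lemma single_rule_eq r r' : r \in rules -> r' \in rules -> r = r'.
Proof.
rewrite -!(mem_undup rules); move: one_rule.
by case: (undup rules) => [|r0 [|? ?]] //= _; rewrite !inE => /eqP -> /eqP ->.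
Qed.

(* The only rule is terminating, so each derivation is a single step. *)
Lemma single_rule_gen A w : rl_gen rules A w -> (A, w, None) \in rules.
Proof. by elim=> // A' w' B v step _ term; have := single_rule_eq step term. Qed.

Lemma single_rule_word A w A' w' :
  rl_gen rules A w -> rl_gen rules A' w' -> w = w'.
Proof.
move=> /single_rule_gen gen_w /single_rule_gen gen_w'.
by case: (single_rule_eq gen_w gen_w').
Qed.
End SingleRule.

Section ChainTrees.
Variables (N T : finType).
Implicit Types (t u : tree N T) (ts : seq (tree N T)).

Lemma yield_cons A u ts :
  yield (TNode A (u :: ts)) = yield u ++ yield (TNode A ts).
Proof. by []. Qed.

Lemma height_cons A u ts :
  height (TNode A (u :: ts)) = maxn (height u).+1 (height (TNode A ts)).
Proof. by []. Qed.

Lemma level1_node A ts : level 1 (TNode A ts) = pmap (@label N T) ts.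
Proof. by elim: ts => //= u ts ->; case: u. Qed.

Lemma yield_shallow A ts :
  height (TNode A ts) <= 1 -> size (yield (TNode A ts)) <= size (pmap (@label N T) ts).
Proof.
elim: ts => // u ts IH; rewrite height_cons geq_max => /andP[h_u /IH {}IH].
rewrite yield_cons size_cat; move: (size (yield _)) IH => rest IH.
case: u h_u => [a|_|B [|v vs]] //= h_u; last by rewrite ltnS geq_max in h_u.
exact: ltnW.
Qed.

Definition max_rhs (P : seq (N * seq (N + T))) : nat := \max_(r <- P) size r.2.

Lemma rhs_le_max_rhs P r : r \in P -> size r.2 <= max_rhs P.
Proof. by move=> rP; rewrite /max_rhs (big_rem r rP) leq_maxl. Qed.

Lemma height_unary A u : height (TNode A [:: u]) = (height u).+1.
Proof. by rewrite /= maxn0. Qed.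

Lemma yield_unary A u : yield (TNode A [:: u]) = yield u.
Proof. by rewrite /= cats0. Qed.

Lemma level_unary A u j : level j.+1 (TNode A [:: u]) = level j u.
Proof. by rewrite /= cats0. Qed.

(* Children without lambda leaves all carry a label; so if their labels form
   a one-letter word, there is exactly one child. *)
Lemma single_child ts x :
  all (fun u => ~~ is_eps u) ts -> pmap (@label N T) ts = [:: x] ->
  exists2 u, ts = [:: u] & label u = Some x.
Proof.
case: ts => [|u [|u' us]] //=.
  by case: u => [a|//|A vs] _ [<-]; [exists (TLeaf _ a) | exists (TNode A vs)].
by case: u => [a|//|A vs]; case: u' => [b|//|B ws].
Qed.

(* A derivation tree rooted at S whose non-final levels all equal [S] is a
   chain of S-nodes ending in one production, so its yield has length at
   most max_rhs P. *)
Lemma chain_yield_bound (P : seq (N * seq (N + T))) (S : N) t :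
  label t = Some (inl S) -> valid P t ->
  (forall j, j < height t -> level j t = [:: inl S]) ->
  size (yield t) <= max_rhs P.
Proof.
elim: {t}(height t).+1 {-2}t (ltnSn (height t)) => // n IH.
case=> [a|//|A ts] // h_t [->] [[rule_ts shape_ts] valid_ts] levels.
have [shallow|deep] := leqP (height (TNode S ts)) 1.
  exact: leq_trans (yield_shallow shallow) (rhs_le_max_rhs rule_ts).
have no_eps : all (fun u => ~~ is_eps u) ts.
  by case: shape_ts => [ts_eps|[]//]; move: deep; rewrite ts_eps.
have := levels 1 deep; rewrite level1_node => /(single_child no_eps)[u ts_u root_u].
move: h_t valid_ts levels; rewrite ts_u height_unary yield_unary => h_u [valid_u _] levels.
apply: IH => // j lt_j; rewrite -(level_unary S); exact: levels.
Qed.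
End ChainTrees.

Lemma TC_RLP1_bounded (T : finType) (L : seq T -> Prop) :
  TC_RLP 1 L -> exists bound, forall z, L z -> size z <= bound.
Proof.
move=> [N [P [S [R [_ [[M [rules [S0 [one_rule genR]]]] genL]]]]]].
exists (max_rhs P); move=> z /genL [t [[root_t valid_t] [<- control]]].
have level0 : level 0 t = [:: inl S] by rewrite /= /node_word root_t.
apply: (chain_yield_bound root_t valid_t) => j lt_j.
have control0 := control 0 (leq_ltn_trans (leq0n j) lt_j).
rewrite level0 in control0.
exact: (single_rule_word one_rule (proj1 (genR _) (control j lt_j))
                                  (proj1 (genR _) control0)).
Qed.

Definition doubling : seq (unit * seq (unit + unit)) :=
  [:: (tt, [:: inl tt; inl tt]); (tt, [:: inr tt])].

Definition star_rules : seq (unit * seq (unit + unit) * option unit) :=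
  [:: (tt, [:: inl tt], Some tt); (tt, [::], None)].

Definition star : seq (unit + unit) -> Prop := rl_gen star_rules tt.

Definition doubling_lang : seq unit -> Prop := tc_lang doubling tt star.

Lemma star_nseq n : star (nseq n (inl tt)).
Proof.
elim: n => [|n IH]; first by apply: rl_term; rewrite !inE.
exact: (rl_step (B := tt) (w := [:: inl tt])).
Qed.

Lemma star_RLP2 : RLP 2 star.
Proof. by exists unit, star_rules, tt. Qed.

Lemma doubling_wf : tc_wf doubling tt.
Proof. by move=> A alpha; rewrite !inE => /orP[] /eqP[_ ->]. Qed.

Fixpoint full (k : nat) : tree unit unit :=
  if k is k'.+1 then TNode tt [:: full k'; full k'] else TNode tt [:: TLeaf _ tt].

Lemma label_full k : label (full k) = Some (inl tt).
Proof. by case: k. Qed.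

Lemma valid_full k : valid doubling (full k).
Proof.
elim: k => [|k IH] /=; first by split=> //; split; [rewrite !inE | right].
split=> //; rewrite /rule_ok /= label_full; split; first by rewrite !inE.
by right; split=> //; case: k {IH}.
Qed.

Lemma height_full k : height (full k) = k.+1.
Proof. by elim: k => //= k ->; rewrite maxn0 maxnn. Qed.

Lemma level_full k j : j <= k -> level j (full k) = nseq (2 ^ j) (inl tt).
Proof.
elim: k j => [|k IH] [|j] //= le_jk.
by rewrite IH // cats0 -nseqD expnS mul2n addnn.
Qed.

Lemma size_yield_full k : size (yield (full k)) = 2 ^ k.
Proof. by elim: k => //= k IH; rewrite cats0 size_cat IH expnS mul2n addnn. Qed.

Lemma doubling_lang_full k : doubling_lang (yield (full k)).
Proof.
exists (full k); split; first by split; [exact: label_full | exact: valid_full].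
split=> // j; rewrite height_full ltnS => le_jk.
by rewrite level_full //; apply: star_nseq.
Qed.

Lemma doubling_TC2 : TC_RLP 2 doubling_lang.
Proof.
by exists unit, doubling, tt, star; split; [exact: doubling_wf | split; [exact: star_RLP2 |]].
Qed.

Lemma doubling_not_TC1 : ~ TC_RLP 1 doubling_lang.
Proof.
move=> /TC_RLP1_bounded [bound bounded].
have := bounded _ (doubling_lang_full bound).
by rewrite size_yield_full leqNgt ltn_expl.
Qed.

Theorem mainTheorem6 :
  (forall (T : finType) (L : seq T -> Prop), TC_RLP 1 L -> TC_RLP 2 L) /\
  (exists (T : finType) (L : seq T -> Prop), TC_RLP 2 L /\ ~ TC_RLP 1 L).
Proof.
split; first by move=> T L; apply: TC_RLP_mono.
by exists unit, doubling_lang; split; [exact: doubling_TC2 | exact: doubling_not_TC1].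
Qed.
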